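(* Let $\pi\colon (X,T)\to(Y,S)$ be a factor map between systems, with $(Y,S)$ minimal, and assume that for some $y_0\in Y$ the fiber $\pi^{-1}(\{y_0\})$ is proximal. Then $\pi$ is a proximal extension, i.e. every fiber $\pi^{-1}(\{y\})$, $y\in Y$, is proximal.
   Context: A system is a compact metric space with a homeomorphism. A factor map is a continuous surjection $\pi$ with $\pi\circ T=S\circ\pi$. Points $x_1,x_2\in X$ are proximal if $\inf_{n\in\mathbb N} d(T^nx_1,T^nx_2)=0$; a set $F\subset X$ is proximal if every pair of its points is proximal. $\pi$ is a proximal extension if every fiber $\pi^{-1}(\{y\})$ is proximal. *)

From Stdlib Require Import Reals.
Open Scope R_scope.

Definition is_metric {X : Type} (d : X -> X -> R) : Prop :=
  (forall x y, 0 <= d x y) /\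
  (forall x y, d x y = 0 <-> x = y) /\
  (forall x y, d x y = d y x) /\
  (forall x y z, d x z <= d x y + d y z).

Definition is_open {X : Type} (d : X -> X -> R) (U : X -> Prop) : Prop :=
  forall x, U x -> exists eps, 0 < eps /\ forall y, d x y < eps -> U y.

Definition is_closed {X : Type} (d : X -> X -> R) (A : X -> Prop) : Prop :=
  is_open d (fun x => ~ A x).

Definition is_compact {X : Type} (d : X -> X -> R) : Prop :=
  forall (I : Type) (U : I -> X -> Prop),
    (forall i, is_open d (U i)) ->
    (forall x, exists i, U i x) ->
    exists l : list I, forall x, exists i, List.In i l /\ U i x.

Definition compact_metric_space {X : Type} (d : X -> X -> R) : Prop :=
  is_metric d /\ is_compact d.

Definition continuous_map {X Y : Type} (dX : X -> X -> R) (dY : Y -> Y -> R)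
  (f : X -> Y) : Prop :=
  forall x eps, 0 < eps -> exists delta, 0 < delta /\
    forall x', dX x x' < delta -> dY (f x) (f x') < eps.

Definition homeomorphism {X : Type} (d : X -> X -> R) (T : X -> X) : Prop :=
  continuous_map d d T /\
  exists Tinv : X -> X, continuous_map d d Tinv /\
    (forall x, Tinv (T x) = x) /\ (forall x, T (Tinv x) = x).

Definition is_system {X : Type} (d : X -> X -> R) (T : X -> X) : Prop :=
  compact_metric_space d /\ homeomorphism d T.

Definition minimal {Y : Type} (d : Y -> Y -> R) (S : Y -> Y) : Prop :=
  forall A : Y -> Prop,
    is_closed d A -> (exists y, A y) -> (forall y, A y -> A (S y)) ->
    forall y, A y.

Definition factor_map {X Y : Type} (dX : X -> X -> R) (T : X -> X)
  (dY : Y -> Y -> R) (S : Y -> Y) (pi : X -> Y) : Prop :=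
  continuous_map dX dY pi /\
  (forall y, exists x, pi x = y) /\
  (forall x, pi (T x) = S (pi x)).

Definition proximal_pair {X : Type} (d : X -> X -> R) (T : X -> X) (x1 x2 : X) : Prop :=
  forall eps, 0 < eps -> exists n : nat,
    d (Nat.iter n T x1) (Nat.iter n T x2) < eps.

Definition proximal_set {X : Type} (d : X -> X -> R) (T : X -> X) (F : X -> Prop) : Prop :=
  forall x1 x2, F x1 -> F x2 -> proximal_pair d T x1 x2.

Definition fiber {X Y : Type} (pi : X -> Y) (y : Y) : X -> Prop :=
  fun x => pi x = y.

Definition proximal_extension {X Y : Type} (dX : X -> X -> R) (T : X -> X)
  (pi : X -> Y) : Prop :=
  forall y, proximal_set dX T (fiber pi y).

(** Let [x1], [x2] lie over [y]. Since [Y] is minimal, [y0] is a limit point of the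
    orbit of [y]. Along the times [n] at which [S^n y] is close to [y0], compactness gives
    joint limit points [z1], [z2] of [T^n x1] and [T^n x2]; they lie over [y0], hence
    are proximal, and continuity of [T^m] transfers the closeness of [T^m z1] and
    [T^m z2] back to [T^(m+n) x1] and [T^(m+n) x2].

    Families of "large" sets of times are encoded by grills on [nat]: upward closed families of sets of times, not containing the empty set, such
    that a union belongs to the family only if one of its parts does. Passing to a
    subsequence becomes localizing a grill at a cluster point. *)

From Stdlib Require Import Reals.
From Stdlib Require Import Lra Classical List.
Open Scope R_scope.

Lemma exists_pos_not (P : R -> Prop) :
  ~ (forall e, 0 < e -> P e) -> exists e, 0 < e /\ ~ P e.
Proof.
  intro H; apply NNPP; intro Hn; apply H; intros e He.
  apply NNPP; intro HPe; apply Hn; exists e; split; assumption.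
Qed.

Section Metric.
Context {X : Type} (d : X -> X -> R) (Hd : is_metric d).

Lemma dist_nonneg x y : 0 <= d x y.
Proof. apply (proj1 Hd). Qed.

Lemma dist_eq0 x y : d x y = 0 <-> x = y.
Proof. apply (proj1 (proj2 Hd)). Qed.

Lemma dist_refl x : d x x = 0.
Proof. apply dist_eq0; reflexivity. Qed.

Lemma dist_sym x y : d x y = d y x.
Proof. apply (proj1 (proj2 (proj2 Hd))). Qed.

Lemma dist_triangle x y z : d x z <= d x y + d y z.
Proof. apply (proj2 (proj2 (proj2 Hd))). Qed.

Lemma eq_of_dist_small x y : (forall r, 0 < r -> d x y < r) -> x = y.
Proof.
  intro Hsmall; apply dist_eq0.
  destruct (Rle_lt_or_eq_dec _ _ (dist_nonneg x y)) as [Hlt | Heq]; [|auto].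
  specialize (Hsmall _ Hlt); lra.
Qed.

Lemma ball_open (c : X) (r : R) : is_open d (fun x => d c x < r).
Proof.
  intros x Hx; exists (r - d c x); split; [lra|].
  intros y Hy; pose proof (dist_triangle c x y); lra.
Qed.

End Metric.

Lemma iter_continuous {X : Type} (d : X -> X -> R) (T : X -> X) :
  continuous_map d d T -> forall m, continuous_map d d (Nat.iter m T).
Proof.
  intros HT m; induction m as [|m IH]; intros x eps Heps.
  - exists eps; split; auto.
  - destruct (HT (Nat.iter m T x) eps Heps) as [d1 [Hd1 H1]].
    destruct (IH x d1 Hd1) as [d2 [Hd2 H2]].
    exists d2; split; auto; intros x' Hx; apply H1, H2, Hx.
Qed.

Lemma iter_semiconj {X Y : Type} (T : X -> X) (S : Y -> Y) (pi : X -> Y) :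
  (forall x, pi (T x) = S (pi x)) ->
  forall n x, pi (Nat.iter n T x) = Nat.iter n S (pi x).
Proof.
  intros H n x; induction n as [|n IH]; simpl; [reflexivity|].
  rewrite H, IH; reflexivity.
Qed.

Record grill (F : (nat -> Prop) -> Prop) : Prop := {
  grill_mono : forall A B : nat -> Prop, (forall n, A n -> B n) -> F A -> F B;
  grill_or : forall A B : nat -> Prop, F (fun n => A n \/ B n) -> F A \/ F B;
  grill_not_empty : ~ F (fun _ => False)
}.

Definition somewhere (A : nat -> Prop) : Prop := exists n, A n.

Definition localize {X : Type} (F : (nat -> Prop) -> Prop) (d : X -> X -> R)
  (c : X) (v : nat -> X) (A : nat -> Prop) : Prop :=
  forall eps, 0 < eps -> F (fun n => A n /\ d c (v n) < eps).

Definition cluster_point {X : Type} (F : (nat -> Prop) -> Prop) (d : X -> X -> R)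
  (v : nat -> X) (c : X) : Prop :=
  localize F d c v (fun _ => True).

Lemma somewhere_grill : grill somewhere.
Proof.
  split.
  - intros A B HAB [n Hn]; exists n; auto.
  - intros A B [n [Hn | Hn]]; [left | right]; exists n; exact Hn.
  - intros [n []].
Qed.

Section Grill.
Context (F : (nat -> Prop) -> Prop) (HF : grill F).

Lemma grill_witness (A : nat -> Prop) : F A -> exists n, A n.
Proof.
  intro HA; apply NNPP; intro Hn; apply (grill_not_empty _ HF).
  apply (grill_mono _ HF A); [|exact HA].
  intros n Hn'; apply Hn; exists n; exact Hn'.
Qed.

Lemma grill_In {I : Type} (l : list I) (A : I -> nat -> Prop) :
  F (fun n => exists i, In i l /\ A i n) -> exists i, In i l /\ F (A i).
Proof.
  induction l as [|a l IH]; intro Hl.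
  - exfalso; apply (grill_not_empty _ HF).
    apply (grill_mono _ HF _ _ (fun n '(ex_intro _ _ (conj Hi _)) => Hi) Hl).
  - assert (Hsplit : F (fun n => A a n \/ exists i, In i l /\ A i n)).
    { refine (grill_mono _ HF _ _ _ Hl).
      intros n [i [[<- | Hi] HA]]; [left | right; exists i]; auto. }
    destruct (grill_or _ HF _ _ Hsplit) as [Ha | Hrest].
    + exists a; split; [left; reflexivity | exact Ha].
    + destruct (IH Hrest) as [i [Hi HAi]]; exists i; split; [right|]; assumption.
Qed.

Context {X : Type} (d : X -> X -> R).

Lemma localize_grill (c : X) (v : nat -> X) : grill (localize F d c v).
Proof.
  split.
  - intros A B HAB HA eps Heps.
    apply (grill_mono _ HF _ _ (fun n '(conj Hn Hd) => conj (HAB n Hn) Hd) (HA eps Heps)).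
  - intros A B HAB; apply NNPP; intro Hn; apply not_or_and in Hn as [HnA HnB].
    destruct (exists_pos_not _ HnA) as [e1 [He1 H1]].
    destruct (exists_pos_not _ HnB) as [e2 [He2 H2]].
    pose proof (Rmin_l e1 e2); pose proof (Rmin_r e1 e2).
    assert (Hboth : F (fun n => (A n /\ d c (v n) < e1) \/ (B n /\ d c (v n) < e2))).
    { apply (grill_mono _ HF (fun n => (A n \/ B n) /\ d c (v n) < Rmin e1 e2)).
      - intros n [[Hn' | Hn'] Hdn]; [left | right]; split; auto; lra.
      - apply HAB, Rmin_glb_lt; assumption. }
    destruct (grill_or _ HF _ _ Hboth); contradiction.
  - intro Hempty; apply (grill_not_empty _ HF).
    apply (grill_mono _ HF _ _ (fun n '(conj H _) => H) (Hempty 1 Rlt_0_1)).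
Qed.

Lemma localize_sub (c : X) (v : nat -> X) (A : nat -> Prop) :
  localize F d c v A -> F A.
Proof.
  intro HA; apply (grill_mono _ HF _ _ (fun n '(conj H _) => H) (HA 1 Rlt_0_1)).
Qed.

Lemma cluster_point_of_localize {Z : Type} (dZ : Z -> Z -> R) (c : X) (v : nat -> X)
  (u : nat -> Z) (z : Z) :
  cluster_point (localize F d c v) dZ u z -> cluster_point F dZ u z.
Proof.
  intros Hz eps Heps; exact (localize_sub c v _ (Hz eps Heps)).
Qed.

Lemma exists_cluster_point (Hd : is_metric d) (HK : is_compact d) (u : nat -> X) :
  F (fun _ => True) -> exists z, cluster_point F d u z.
Proof.
  (* Otherwise the balls in which [u] lingers only [F]-rarely cover [X], and a finite
     subcover would split the [F]-large set of all times into [F]-rare pieces. *)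
  intro Htrue; apply NNPP; intro Hnone.
  set (Idx := {p : X * R | ~ F (fun n => d (fst p) (u n) < snd p)}).
  set (U := fun (i : Idx) (x : X) => d (fst (proj1_sig i)) x < snd (proj1_sig i)).
  assert (Hcover : forall x, exists i, U i x).
  { intro x.
    assert (Hx : ~ cluster_point F d u x) by (intro Hx; apply Hnone; exists x; exact Hx).
    destruct (exists_pos_not _ Hx) as [r [Hr Hnot]].
    assert (Hball : ~ F (fun n => d x (u n) < r)).
    { intro Hb; apply Hnot.
      apply (grill_mono _ HF _ _ (fun n Hn => conj I Hn) Hb). }
    exists (exist _ (x, r) Hball); unfold U; simpl; rewrite (dist_refl d Hd); exact Hr. }
  destruct (HK Idx U (fun i => ball_open d Hd _ _) Hcover) as [l Hl].
  destruct (grill_In l (fun i n => U i (u n))) as [i [_ Hi]].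
  { apply (grill_mono _ HF _ _ (fun n _ => Hl (u n)) Htrue). }
  exact (proj2_sig i Hi).
Qed.

Lemma cluster_point_jointly (c : X) (v u : nat -> X) (z : X) :
  cluster_point (localize F d c v) d u z ->
  forall delta, 0 < delta -> exists n, d c (v n) < delta /\ d z (u n) < delta.
Proof.
  intros Hz delta Hdelta.
  destruct (grill_witness _ (Hz delta Hdelta delta Hdelta)) as [n [[_ Hu] Hv]].
  exists n; split; assumption.
Qed.

End Grill.

Lemma cluster_point_map {X Y : Type} (dX : X -> X -> R) (dY : Y -> Y -> R)
  (HdY : is_metric dY) (f : X -> Y) (Hf : continuous_map dX dY f)
  (F : (nat -> Prop) -> Prop) (HF : grill F) (w : nat -> Y) (c : Y)
  (u : nat -> X) (Hu : forall n, f (u n) = w n) (z : X) :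
  cluster_point (localize F dY c w) dX u z -> f z = c.
Proof.
  intro Hz; symmetry; apply (eq_of_dist_small dY HdY); intros r Hr.
  destruct (Hf z (r / 2) ltac:(lra)) as [delta [Hdelta Hcont]].
  destruct (grill_witness F HF _ (Hz delta Hdelta (r / 2) ltac:(lra))) as [k [[_ Hzk] Hwk]].
  specialize (Hcont _ Hzk); rewrite Hu in Hcont.
  pose proof (dist_triangle dY HdY c (w k) (f z)).
  rewrite (dist_sym dY HdY (w k) (f z)) in *; lra.
Qed.

Lemma minimal_cluster_orbit {Y : Type} (d : Y -> Y -> R) (S : Y -> Y)
  (Hd : is_metric d) (HS : continuous_map d d S) (Hmin : minimal d S) (y y' : Y) :
  cluster_point somewhere d (fun n => Nat.iter n S y) y'.
Proof.
  set (orbit := fun n => Nat.iter n S y).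
  revert y'; apply Hmin.
  - intros x Hx.
    destruct (exists_pos_not _ Hx) as [g [Hg Hfar]].
    exists (g / 2); split; [lra|]; intros x' Hxx' Hx'.
    destruct (Hx' (g / 2) ltac:(lra)) as [n [_ Hn]].
    apply Hfar; exists n; split; [exact I|].
    pose proof (dist_triangle d Hd x x' (orbit n)); lra.
  - exists y; intros g Hg; exists O; split; [exact I|].
    unfold orbit; simpl; rewrite (dist_refl d Hd); exact Hg.
  - intros x Hx g Hg.
    destruct (HS x g Hg) as [delta [Hdelta Hcont]].
    destruct (Hx delta Hdelta) as [n [_ Hn]].
    exists (Datatypes.S n); split; [exact I | apply Hcont, Hn].
Qed.

Lemma proximal_pair_of_approx {X : Type} (d : X -> X -> R) (Hd : is_metric d)
  (T : X -> X) (HT : continuous_map d d T) (x1 x2 z1 z2 : X) :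
  proximal_pair d T z1 z2 ->
  (forall delta, 0 < delta -> exists n,
     d z1 (Nat.iter n T x1) < delta /\ d z2 (Nat.iter n T x2) < delta) ->
  proximal_pair d T x1 x2.
Proof.
  intros Hz Happrox eps Heps.
  destruct (Hz (eps / 3) ltac:(lra)) as [m Hm].
  destruct (iter_continuous d T HT m z1 (eps / 3) ltac:(lra)) as [d1 [Hd1 Hc1]].
  destruct (iter_continuous d T HT m z2 (eps / 3) ltac:(lra)) as [d2 [Hd2 Hc2]].
  pose proof (Rmin_l d1 d2); pose proof (Rmin_r d1 d2).
  destruct (Happrox (Rmin d1 d2) (Rmin_glb_lt _ _ _ Hd1 Hd2)) as [n [Hn1 Hn2]].
  exists (m + n)%nat; rewrite !Nat.iter_add.
  specialize (Hc1 (Nat.iter n T x1) ltac:(lra)).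
  specialize (Hc2 (Nat.iter n T x2) ltac:(lra)).
  pose proof (dist_triangle d Hd (Nat.iter m T (Nat.iter n T x1)) (Nat.iter m T z1)
                (Nat.iter m T (Nat.iter n T x2))).
  pose proof (dist_triangle d Hd (Nat.iter m T z1) (Nat.iter m T z2)
                (Nat.iter m T (Nat.iter n T x2))).
  pose proof (dist_sym d Hd (Nat.iter m T (Nat.iter n T x1)) (Nat.iter m T z1)); lra.
Qed.

Theorem mainTheorem2 (X Y : Type) (dX : X -> X -> R) (dY : Y -> Y -> R)
  (T : X -> X) (S : Y -> Y) (pi : X -> Y)
  (HX : is_system dX T) (HY : is_system dY S)
  (Hpi : factor_map dX T dY S pi)
  (Hmin : minimal dY S)
  (y0 : Y) (Hy0 : proximal_set dX T (fiber pi y0)) :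
  proximal_extension dX T pi.
Proof.
  destruct HX as [[HdX HKX] [HT _]], HY as [[HdY _] [HS _]], Hpi as [Hpic [_ Hsemi]].
  intros y x1 x2 Hx1 Hx2.
  set (F0 := localize somewhere dY y0 (fun n => Nat.iter n S y)).
  assert (HF0 : grill F0) by apply (localize_grill _ somewhere_grill).
  destruct (exists_cluster_point F0 HF0 dX HdX HKX (fun n => Nat.iter n T x1)
              (minimal_cluster_orbit dY S HdY HS Hmin y y0)) as [z1 Hz1].
  set (F1 := localize F0 dX z1 (fun n => Nat.iter n T x1)).
  destruct (exists_cluster_point F1 (localize_grill _ HF0 dX _ _) dX HdX HKX
              (fun n => Nat.iter n T x2) Hz1) as [z2 Hz2].
  assert (Hover : forall x, fiber pi y x -> forall n, pi (Nat.iter n T x) = Nat.iter n S y).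
  { intros x Hx n; rewrite (iter_semiconj T S pi Hsemi), Hx; reflexivity. }
  assert (Hz1y0 : fiber pi y0 z1)
    by exact (cluster_point_map dX dY HdY pi Hpic _ somewhere_grill _ _ _ (Hover x1 Hx1) z1 Hz1).
  assert (Hz2y0 : fiber pi y0 z2)
    by exact (cluster_point_map dX dY HdY pi Hpic _ somewhere_grill _ _ _ (Hover x2 Hx2) z2
                (cluster_point_of_localize F0 HF0 dX dX z1 _ _ z2 Hz2)).
  apply (proximal_pair_of_approx dX HdX T HT x1 x2 z1 z2 (Hy0 z1 z2 Hz1y0 Hz2y0)).
  exact (cluster_point_jointly F0 HF0 dX z1 _ _ z2 Hz2).
Qed.
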